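(* Let $f:\mathbb{R}\to\mathbb{R}^T$ be a function each of whose outputs $f_t$ is continuous piecewise linear and interpolates the dataset $\mathcal{D}_t=\{(x_i,y_{it})\}_{i=1}^N$. Suppose that at some point $\tilde x$ lying strictly between consecutive data points, one or more of the outputs $f_t$ has a knot. Let $\tilde x_1<\tilde x<\tilde x_2$ be the closest knots of $f$ (in any output) before and after $\tilde x$, let $\tau=\frac{\tilde x-\tilde x_1}{\tilde x_2-\tilde x_1}$, and suppose the slopes of each $f_t$ are: $a_t$ immediately to the left of $\tilde x_1$, $b_t+\delta_t$ on $(\tilde x_1,\tilde x)$, $b_t-\frac{\tau}{1-\tau}\delta_t$ on $(\tilde x,\tilde x_2)$, and $c_t$ immediately to the right of $\tilde x_2$. Let $\mathbf{a},\mathbf{b},\mathbf{c},\boldsymbol\delta\in\mathbb{R}^T$ collect these values. Then replacing $f$ on $[\tilde x_1,\tilde x_2]$ by the straight line connecting $f(\tilde x_1)$ and $f(\tilde x_2)$ (i.e., removing the knot at $\tilde x$) does not increase $R(f)$. Furthermore, if $\mathbf{a}-\mathbf{b}$ and $\mathbf{b}-\mathbf{c}$ are not aligned, doing so strictly decreases $R(f)$.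
   Context: Networks: $f_\theta(x)=\sum_{k=1}^K \mathbf{v}_k(w_kx+b_k)_+ + \mathbf{a}_0x+\mathbf{c}_0$ with $w_k,b_k\in\mathbb{R}$, $\mathbf{v}_k,\mathbf{a}_0,\mathbf{c}_0\in\mathbb{R}^T$, $K$ a fixed width, $(z)_+=\max\{0,z\}$. The representational cost of a function $f:\mathbb{R}\to\mathbb{R}^T$ is $R(f)=\inf_\theta \sum_{k=1}^K\|\mathbf{v}_k\|_2$ subject to $|w_k|=1$ for all $k$ and $f=f_\theta$. A knot of $f_t$ is a point where the slope of $f_t$ changes. Two vectors $\mathbf{u}_1,\mathbf{u}_2$ are aligned if $\mathbf{u}_1^\top\mathbf{u}_2=\|\mathbf{u}_1\|_2\|\mathbf{u}_2\|_2$. By construction the straight line from $(\tilde x_1,f_t(\tilde x_1))$ to $(\tilde x_2,f_t(\tilde x_2))$ has slope $b_t$. *)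

From HB Require Import structures.
From mathcomp Require Import all_boot all_order all_algebra.
From mathcomp Require Import all_classical all_reals all_analysis.
Set Implicit Arguments. Unset Strict Implicit. Unset Printing Implicit Defensive.
Import Order.TTheory GRing.Theory Num.Theory numFieldNormedType.Exports.
Local Open Scope ring_scope.
Local Open Scope classical_set_scope.

Section Defs.
Variable R : realType.

Definition norm2 (T : nat) (u : 'I_T -> R) : R := Num.sqrt (\sum_(t < T) u t ^+ 2).
Definition dotv (T : nat) (u v : 'I_T -> R) : R := \sum_(t < T) u t * v t.
Definition aligned (T : nat) (u1 u2 : 'I_T -> R) : Prop :=
  dotv u1 u2 = norm2 u1 * norm2 u2.

Definition net (K T : nat) (w b : 'I_K -> R) (v : 'I_K -> 'I_T -> R)
  (a0 c0 : 'I_T -> R) : R -> 'I_T -> R :=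
  fun x t => \sum_(k < K) v k t * Num.max 0 (w k * x + b k) + a0 t * x + c0 t.

(* Representational cost R(f) (infimum in extended reals; +oo if f is not
   representable by a width-K network). *)
Definition repcost (K T : nat) (f : R -> 'I_T -> R) : \bar R :=
  ereal_inf [set r : \bar R | exists (w b : 'I_K -> R) (v : 'I_K -> 'I_T -> R)
      (a0 c0 : 'I_T -> R),
      (forall k, `|w k| = 1) /\ f = net w b v a0 c0 /\
      r = (\sum_(k < K) norm2 (v k))%:E].

Definition is_knot (g : R -> R) (p : R) : Prop :=
  ~ (exists e : R, 0 < e /\ exists al be : R,
        forall x, `|x - p| < e -> g x = al * x + be).

Definition cpwl (g : R -> R) : Prop :=
  continuous g /\ exists S : seq R, forall p, is_knot g p -> p \in S.

Definition fknot (T : nat) (f : R -> 'I_T -> R) (p : R) : Prop :=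
  exists t, is_knot (fun x => f x t) p.

Definition slope_on (g : R -> R) (l r s : R) : Prop :=
  forall x y, l < x < r -> l < y < r -> g y - g x = s * (y - x).
Definition slope_left (g : R -> R) (p s : R) : Prop :=
  exists2 e : R, 0 < e & slope_on g (p - e) p s.
Definition slope_right (g : R -> R) (p s : R) : Prop :=
  exists2 e : R, 0 < e & slope_on g p (p + e) s.

Definition remove_knot (T : nat) (f : R -> 'I_T -> R) (x1 x2 : R) : R -> 'I_T -> R :=
  fun x t => if (x1 <= x) && (x <= x2)
             then f x1 t + (x - x1) / (x2 - x1) * (f x2 t - f x1 t)
             else f x t.

End Defs.

(* Since |w_k| = 1, every neuron is a hinge (x - p_k)_+ plus an affine term, so near
   any point p a network is a single hinge whose height, the jump of its slope at p, is
   the sum of the output weights of the neurons located at p.  With q = tau / (1 - tau),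
   removing the knot at x replaces the jumps b + d - a, -(1 + q) d and c - b + q d at
   x1, x and x2 by b - a, 0 and c - b.  One neuron at x1 and one at x2 carry the new
   jumps while all other neurons there and at x are switched off, so the cost drops by
   at least the difference of the jump norms.  That difference is nonnegative by the
   triangle inequalities for b - a = (b + d - a) - d and c - b = (c - b + q d) - q d,
   and it vanishes only if both are equalities, which makes a - b and b - c nonnegative
   multiples of d. *)

From HB Require Import structures.
From mathcomp Require Import all_boot all_order all_algebra.
From mathcomp Require Import all_classical all_reals all_analysis.
From mathcomp Require Import ring lra.
Set Implicit Arguments. Unset Strict Implicit. Unset Printing Implicit Defensive.
Import Order.TTheory GRing.Theory Num.Theory.
Local Open Scope ring_scope.

Section Norm2.
Variables (R : realType) (T : nat).
Implicit Types (u v : 'I_T -> R) (l m : R).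

Lemma norm2_ge0 u : 0 <= norm2 u.
Proof. exact: sqrtr_ge0. Qed.

Lemma sqr_norm2 u : norm2 u ^+ 2 = \sum_(t < T) u t ^+ 2.
Proof. by rewrite sqr_sqrtr // sumr_ge0 // => t _; rewrite sqr_ge0. Qed.

Lemma norm2_eq0 u : norm2 u = 0 -> forall t, u t = 0.
Proof.
move=> u0 t; have /psumr_eq0P sq0 : \sum_(t < T) u t ^+ 2 = 0.
  by rewrite -sqr_norm2 u0 expr0n.
by apply/eqP; rewrite -sqrf_eq0 sq0 // => i _; rewrite sqr_ge0.
Qed.

Lemma norm2_cst0 : norm2 (fun _ : 'I_T => 0 : R) = 0.
Proof. by rewrite /norm2 big1 ?sqrtr0 // => t _; rewrite expr0n. Qed.

Lemma norm2Z l u : norm2 (fun t => l * u t) = `|l| * norm2 u.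
Proof.
rewrite /norm2 (eq_bigr (fun t => l ^+ 2 * u t ^+ 2)) => [|t _]; last by rewrite exprMn.
by rewrite -mulr_sumr sqrtrM ?sqr_ge0 // sqrtr_sqr.
Qed.

(* Lagrange's identity, which yields Cauchy-Schwarz together with its equality case. *)
Lemma lagrange_norm2 u v :
  \sum_(t < T) (u t * norm2 v - v t * norm2 u) ^+ 2 =
  2 * norm2 u * norm2 v * (norm2 u * norm2 v - dotv u v).
Proof.
rewrite (eq_bigr (fun t => norm2 v ^+ 2 * u t ^+ 2
    - 2 * norm2 u * norm2 v * (u t * v t) + norm2 u ^+ 2 * v t ^+ 2)) => [|t _].
  by rewrite big_split sumrB /= -!mulr_sumr -!sqr_norm2 /dotv; ring.
by ring.
Qed.

Lemma dotv_le u v : dotv u v <= norm2 u * norm2 v.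
Proof.
have dotv0 (w : 'I_T -> R) : norm2 w = 0 -> forall w', dotv w w' = 0 /\ dotv w' w = 0.
  by move=> /norm2_eq0 w0 w'; split; apply: big1 => t _; rewrite w0 (mul0r, mulr0).
have [u0|u0] := eqVneq (norm2 u) 0; first by rewrite (dotv0 u u0 v).1 u0 mul0r.
have [v0|v0] := eqVneq (norm2 v) 0; first by rewrite (dotv0 v v0 u).2 v0 mulr0.
have uv_gt0 : 0 < 2 * norm2 u * norm2 v.
  by rewrite !mulr_gt0 // lt0r ?u0 ?v0 norm2_ge0.
have : 0 <= \sum_(t < T) (u t * norm2 v - v t * norm2 u) ^+ 2.
  by apply: sumr_ge0 => t _; apply: sqr_ge0.
by rewrite lagrange_norm2 pmulr_rge0 // subr_ge0.
Qed.

Lemma sqr_norm2D u v :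
  norm2 (fun t => u t + v t) ^+ 2 = norm2 u ^+ 2 + 2 * dotv u v + norm2 v ^+ 2.
Proof.
rewrite !sqr_norm2 /dotv (eq_bigr (fun t => u t ^+ 2 + 2 * (u t * v t) + v t ^+ 2)).
  by rewrite !big_split /= mulr_sumr.
by move=> t _; ring.
Qed.

Lemma norm2D_le u v : norm2 (fun t => u t + v t) <= norm2 u + norm2 v.
Proof.
rewrite -(ler_pXn2r (n := 2)) ?nnegrE ?addr_ge0 ?norm2_ge0 //.
by rewrite sqr_norm2D; have := dotv_le u v; nra.
Qed.

Lemma norm2D_eq_aligned u v :
  norm2 (fun t => u t + v t) = norm2 u + norm2 v -> aligned u v.
Proof.
move=> /(congr1 (fun x => x ^+ 2)); rewrite sqr_norm2D /aligned => e; lra.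
Qed.

Lemma aligned_propto u v : aligned u v -> norm2 v != 0 ->
  forall t, u t = norm2 u / norm2 v * v t.
Proof.
move=> uv v0 t; have := lagrange_norm2 u v; rewrite uv subrr mulr0.
move=> /psumr_eq0P sq0; have /eqP := sq0 (fun i _ => sqr_ge0 _) t isT.
by rewrite sqrf_eq0 subr_eq0 => /eqP e; apply: (mulIf v0); rewrite e; field.
Qed.

Lemma alignedZ l m u : 0 <= l -> 0 <= m ->
  aligned (fun t => l * u t) (fun t => m * u t).
Proof.
move=> l0 m0; rewrite /aligned !norm2Z !ger0_norm // /dotv.
rewrite (eq_bigr (fun t => l * m * u t ^+ 2)) => [|t _]; last by ring.
by rewrite -mulr_sumr -sqr_norm2; ring.
Qed.

Lemma norm2_sum_le (I : Type) (r : seq I) (P : pred I) (F : I -> 'I_T -> R) :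
  norm2 (fun t => \sum_(i <- r | P i) F i t) <= \sum_(i <- r | P i) norm2 (F i).
Proof.
elim: r => [|i r IH].
  by under [X in norm2 X]funext do rewrite big_nil; rewrite norm2_cst0 big_nil.
rewrite big_cons; under [X in norm2 X]funext do rewrite big_cons.
case: ifP => // _; apply: le_trans (norm2D_le _ _) _; exact: lerD.
Qed.

Lemma norm2N u : norm2 (fun t => - u t) = norm2 u.
Proof.
under [X in norm2 X]funext do rewrite -mulN1r.
by rewrite norm2Z normrN normr1 mul1r.
Qed.

Lemma norm2B_le u v : norm2 (fun t => u t - v t) <= norm2 u + norm2 v.
Proof. by rewrite -(norm2N v); apply: norm2D_le. Qed.

Lemma norm2B_eq u v : norm2 (fun t => u t - v t) = norm2 u + norm2 v ->
  norm2 v != 0 -> exists2 l, 0 <= l & forall t, v t - u t = l * v t.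
Proof.
move=> uv v0; rewrite -(norm2N v) in uv v0.
have {}uv := aligned_propto (norm2D_eq_aligned uv) v0; rewrite norm2N in v0 uv.
exists (1 + norm2 u / norm2 v); first by rewrite addr_ge0 ?divr_ge0 ?norm2_ge0.
by move=> t; rewrite uv; ring.
Qed.

End Norm2.

Section KinkSaving.
Variables (R : realType) (T : nat).
Implicit Types (a b c d : 'I_T -> R) (q : R).

(* The total norm of the jumps of the slope at the three kinks x1 < x < x2, minus
   that of the two jumps left once the middle kink is removed. *)
Definition kink_saving a b c d q : R :=
  norm2 (fun t => b t + d t - a t) + norm2 (fun t => (b t - q * d t) - (b t + d t))
  + norm2 (fun t => c t - (b t - q * d t))
  - norm2 (fun t => b t - a t) - norm2 (fun t => c t - b t).

Lemma kink_savingE a b c d q : 0 <= q ->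
  let u1 := fun t => b t + d t - a t in
  let u2 := fun t => c t - (b t - q * d t) in
  kink_saving a b c d q =
    (norm2 u1 + norm2 d - norm2 (fun t => u1 t - d t))
  + (norm2 u2 + norm2 (fun t => q * d t) - norm2 (fun t => u2 t - q * d t)).
Proof.
move=> q0 u1 u2; rewrite /kink_saving /u1 /u2.
have -> : (fun t => b t - q * d t - (b t + d t)) = (fun t => - (1 + q) * d t).
  by apply: funext => t; ring.
have -> : (fun t => b t + d t - a t - d t) = (fun t => b t - a t).
  by apply: funext => t; ring.
have -> : (fun t => c t - (b t - q * d t) - q * d t) = (fun t => c t - b t).
  by apply: funext => t; ring.
rewrite !norm2Z normrN !ger0_norm ?addr_ge0 //; ring.
Qed.

Lemma kink_saving_ge0 a b c d q : 0 <= q -> 0 <= kink_saving a b c d q.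
Proof.
move=> q0; rewrite kink_savingE //.
by apply: addr_ge0; rewrite subr_ge0 norm2B_le.
Qed.

Lemma kink_saving_gt0 a b c d q : 0 < q -> norm2 d != 0 ->
  ~ aligned (fun t => a t - b t) (fun t => b t - c t) -> 0 < kink_saving a b c d q.
Proof.
move=> q0 d0 not_aligned; rewrite kink_savingE ?ltW //=.
set u1 := fun t => _ - a t; set u2 := fun t => c t - _.
have le1 := norm2B_le u1 d; have le2 := norm2B_le u2 (fun t => q * d t).
rewrite ltNge; apply/negP => le0; apply: not_aligned.
have [l l0 dl] := norm2B_eq (u := u1) (v := d) ltac:(lra) d0.
have qd0 : norm2 (fun t => q * d t) != 0.
  by rewrite norm2Z mulf_neq0 // normr_eq0 gt_eqF.
have [m m0 qdm] := norm2B_eq (u := u2) (v := fun t => q * d t) ltac:(lra) qd0.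
have -> : (fun t => a t - b t) = (fun t => l * d t).
  by apply: funext => t; rewrite -dl /u1; ring.
have -> : (fun t => b t - c t) = (fun t => m * q * d t).
  by apply: funext => t; rewrite -mulrA -qdm /u2; ring.
by apply: alignedZ => //; rewrite mulr_ge0 // ltW.
Qed.

End KinkSaving.

Section Hinge.
Variable R : realType.
Implicit Types (g : R -> R) (p l r s e S : R).

Lemma exists_pos_le3 (e1 e2 e3 : R) : 0 < e1 -> 0 < e2 -> 0 < e3 ->
  exists m : R, [/\ 0 < m, m <= e1, m <= e2 & m <= e3].
Proof.
move=> e10 e20 e30; exists (Num.min e1 (Num.min e2 e3)).
by rewrite !lt_min !ge_min !lexx e10 e20 e30 !orbT.
Qed.

Lemma slope_on_sub g l r s l' r' : l <= l' -> r' <= r ->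
  slope_on g l r s -> slope_on g l' r' s.
Proof.
move=> ll' r'r gs x y /andP[x1 x2] /andP[y1 y2].
by apply: gs; apply/andP; split; lra.
Qed.

Lemma slope_on_left g l p s : l < p -> slope_on g l p s -> slope_left g p s.
Proof. by move=> lp gs; exists (p - l); [lra | apply: slope_on_sub gs; lra]. Qed.

Lemma slope_on_right g p r s : p < r -> slope_on g p r s -> slope_right g p s.
Proof. by move=> pr gs; exists (r - p); [lra | apply: slope_on_sub gs; lra]. Qed.

Lemma slope_on_affine g l r s al be : l < r -> slope_on g l r s ->
  (forall x, l < x < r -> g x = al * x + be) -> s = al.
Proof.
move=> lr gs gE; set x := l + (r - l) / 3; set y := l + (r - l) * 2 / 3.
have xI : l < x < r by apply/andP; rewrite /x; split; lra.
have yI : l < y < r by apply/andP; rewrite /y; split; lra.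
have yx : y - x != 0 by rewrite /x /y; apply/eqP; lra.
have := gs x y xI yI; rewrite (gE x xI) (gE y yI) => e.
by apply: (mulIf yx); rewrite -e; ring.
Qed.

Definition hinge_form g p e S al be :=
  forall x, `|x - p| < e -> g x = S * Num.max 0 (x - p) + al * x + be.

Definition hinge g p S :=
  exists2 e, 0 < e & exists al be, hinge_form g p e S al be.

Lemma hinge_form_left g p e S al be : hinge_form g p e S al be ->
  forall x, p - e < x <= p -> g x = al * x + be.
Proof.
move=> gH x /andP[x1 x2]; rewrite gH ?ler0_norm; try lra.
by rewrite max_l ?mulr0 ?add0r //; lra.
Qed.

Lemma hinge_form_right g p e S al be : hinge_form g p e S al be ->
  forall x, p <= x < p + e -> g x = (S + al) * x + (be - S * p).
Proof.
move=> gH x /andP[x1 x2]; rewrite gH ?ger0_norm; try lra.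
by rewrite max_r; [ring | lra].
Qed.

Lemma hinge_jump g p S sl sr : hinge g p S ->
  slope_left g p sl -> slope_right g p sr -> S = sr - sl.
Proof.
move=> [e e0 [al [be gH]]] [el el0 gl] [er er0 gr].
have [m [m0 me ml mr]] := exists_pos_le3 e0 el0 er0.
have -> : sl = al.
  apply: (slope_on_affine (l := p - m) (r := p) (be := be)); first lra.
    by apply: slope_on_sub gl; lra.
  by move=> x /andP[x1 x2]; apply: (hinge_form_left gH); apply/andP; split; lra.
have -> : sr = S + al.
  apply: (slope_on_affine (l := p) (r := p + m) (be := be - S * p)); first lra.
    by apply: slope_on_sub gr; lra.
  by move=> x /andP[x1 x2]; apply: (hinge_form_right gH); apply/andP; split; lra.
by ring.
Qed.

Lemma hinge_knot g p S : hinge g p S -> is_knot g p -> S != 0.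
Proof.
move=> [e e0 [al [be gH]]] knot; apply/eqP => S0; apply: knot.
by exists e; split => //; exists al, be => x xp; rewrite gH // S0 mul0r add0r.
Qed.

(* g is affine on each side of a hinge, so the slope extends to the end points. *)
Lemma slope_on_closed g l r Sl Sr s : l < r -> hinge g l Sl -> hinge g r Sr ->
  slope_on g l r s -> forall x, l <= x <= r -> g x = g l + s * (x - l).
Proof.
move=> lr [e1 e10 [al1 [be1 gH1]]] [e2 e20 [al2 [be2 gH2]]] gs.
have [m [m0 me1 me2 mlr]] := exists_pos_le3 e10 e20 (ltac:(lra) : 0 < r - l).
have gR := hinge_form_right gH1; have gL := hinge_form_left gH2.
have sR : s = Sl + al1.
  apply: (slope_on_affine (l := l) (r := l + m) (be := be1 - Sl * l)); first lra.
    by apply: slope_on_sub gs; lra.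
  by move=> x /andP[x1 x2]; apply: gR; apply/andP; split; lra.
have sL : s = al2.
  apply: (slope_on_affine (l := r - m) (r := r) (be := be2)); first lra.
    by apply: slope_on_sub gs; lra.
  by move=> x /andP[x1 x2]; apply: gL; apply/andP; split; lra.
set y := l + m / 2; set z := r - m / 2.
have yI : l < y < r by apply/andP; rewrite /y; split; lra.
have zI : l < z < r by apply/andP; rewrite /z; split; lra.
have gy : g y = g l + s * (y - l).
  rewrite !gR ?sR; first ring.
    by apply/andP; split; lra.
  by apply/andP; rewrite /y; split; lra.
have gz : g r = g z + s * (r - z).
  rewrite !gL ?sL; first ring.
    by apply/andP; rewrite /z; split; lra.
  by apply/andP; split; lra.
move=> x /andP[x1 x2].
have [xl|lx] := leP x l.
  have -> : x = l by lra.
  by rewrite subrr mulr0 addr0.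
have [rx|xr] := leP r x.
  have -> : x = r by lra.
  by have := gs y z yI zI; lra.
by have := gs y x yI (ltac:(apply/andP; split) : l < x < r); lra.
Qed.

Lemma chord_relu g (l m r q s dl : R) :
  l < m -> m < r -> q * (r - m) = m - l ->
  (forall x, l <= x <= m -> g x = g l + (s + dl) * (x - l)) ->
  (forall x, m <= x <= r -> g x = g m + (s - q * dl) * (x - m)) ->
  forall x, (if (l <= x) && (x <= r) then g l + (x - l) / (r - l) * (g r - g l) else g x) =
    g x - dl * Num.max 0 (x - l) + (1 + q) * dl * Num.max 0 (x - m)
        - q * dl * Num.max 0 (x - r).
Proof.
move=> lm mr qE gL gR x.
have dqE : dl * (q * (r - m)) = dl * (m - l) by rewrite qE.
have gm : g m = g l + (s + dl) * (m - l) by rewrite gL //; apply/andP; split; lra.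
have chord : g r - g l = s * (r - l).
  by rewrite gR ?gm; [lra | apply/andP; split; lra].
have [xl|lx] /= := ltP x l.
  by rewrite !max_l; lra.
have [xr|rx] /= := leP x r; last by rewrite !max_r; lra.
have rl : r - l != 0 by apply/eqP; lra.
rewrite chord mulrCA divfK //.
have -> : Num.max 0 (x - l) = x - l by rewrite max_r // subr_ge0.
have -> : Num.max 0 (x - r) = 0 by rewrite max_l // subr_le0.
have [xm|mx] := leP x m.
  have -> : Num.max 0 (x - m) = 0 by rewrite max_l // subr_le0.
  by rewrite (gL x); [lra | apply/andP].
have -> : Num.max 0 (x - m) = x - m by rewrite max_r // subr_ge0 ltW.
by rewrite (gR x) ?gm; [lra | apply/andP; split; lra].
Qed.

End Hinge.

Section Relu.
Variable R : realType.

Lemma relu_unit (w0 b0 x : R) : `|w0| = 1 ->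
  Num.max 0 (w0 * x + b0) =
  Num.max 0 (x - - b0 * w0) - (1 - w0) / 2 * (x - - b0 * w0).
Proof.
move/eqP; rewrite eqr_norml => /andP[/orP[|] /eqP-> _].
  by rewrite subrr mul0r mul0r subr0; congr (Num.max 0 _); ring.
have -> : (1 - -1) / 2 = 1 :> R by field.
rewrite mul1r mulrN1 opprK.
by have [x0|x0] := leP 0 (x - b0); [rewrite max_l | rewrite max_r]; lra.
Qed.

Lemma relu_sum_hinge (I : finType) (V P : I -> R) (A B p : R) :
  hinge (fun x => \sum_i V i * Num.max 0 (x - P i) + A * x + B) p
        (\sum_(i | P i == p) V i).
Proof.
set e := \big[Num.min/1]_(i | P i != p) `|P i - p|.
have e0 : 0 < e by apply: lt_bigmin => // i; rewrite normr_gt0 subr_eq0.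
exists e => //.
exists (A + \sum_(i | P i != p) (if P i < p then V i else 0)).
exists (B - \sum_(i | P i != p) (if P i < p then V i * P i else 0)).
move=> x xp; rewrite (bigID (fun i => P i == p)) /=.
rewrite (eq_bigr (fun i => V i * Num.max 0 (x - p))) => [|i /eqP-> //].
rewrite -mulr_suml; set F := \sum_(i | P i != p) _.
have -> : F = \sum_(i | P i != p) ((if P i < p then V i else 0) * x
                                    - (if P i < p then V i * P i else 0)).
  apply: eq_bigr => i Pip; have e_le : e <= `|P i - p| by exact: bigmin_le_cond.
  move: xp e_le; rewrite ltr_norml => /andP[x1 x2].
  case: ifP => [Pi_lt|/negbT].
    by rewrite ltr0_norm ?subr_lt0 // => ?; rewrite max_r; [ring | lra].
  rewrite -leNgt le_eqVlt eq_sym (negbTE Pip) /= => p_lt.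
  by rewrite gtr0_norm ?subr_gt0 // => ?; rewrite max_l; [ring | lra].
by rewrite sumrB -mulr_suml; ring.
Qed.

End Relu.

Section Network.
Variables (R : realType) (K T : nat).
Implicit Types (w b : 'I_K -> R) (v : 'I_K -> 'I_T -> R).

(* Since w k = 1 or -1, (w k * x + b k)_+ is the hinge (x - knotpos w b k)_+ up to an
   affine term. *)
Definition knotpos w b (k : 'I_K) : R := - b k * w k.

Definition jump (I : finType) (P : I -> R) (v : I -> 'I_T -> R) (p : R) : 'I_T -> R :=
  fun t => \sum_(i | P i == p) v i t.

Lemma net_reweight w b v v' (a0 c0 : 'I_T -> R) : (forall k, `|w k| = 1) ->
  exists a1 c1, forall x t, net w b v' a1 c1 x t =
    net w b v a0 c0 x t + \sum_k (v' k t - v k t) * Num.max 0 (x - knotpos w b k).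
Proof.
move=> w1; pose C k := (1 - w k) / 2.
exists (fun t => a0 t + \sum_k (v' k t - v k t) * C k).
exists (fun t => c0 t - \sum_k (v' k t - v k t) * C k * knotpos w b k).
move=> x t; rewrite /net.
under eq_bigr do rewrite relu_unit //.
under [X in _ = X + _ + _ + _]eq_bigr do rewrite relu_unit //.
set H := fun k => Num.max 0 (x - - b k * w k) - (1 - w k) / 2 * (x - - b k * w k).
rewrite -[\sum_i v' i t * _](subrK (\sum_i v i t * H i)) -sumrB.
rewrite (eq_bigr (fun k => (v' k t - v k t) * Num.max 0 (x - knotpos w b k)
  - (v' k t - v k t) * C k * x + (v' k t - v k t) * C k * knotpos w b k)) => [|k _].
  by rewrite !big_split /= sumrN -mulr_suml; ring.
by rewrite /H /C /knotpos; ring.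
Qed.

Lemma net_hinge w b v (a0 c0 : 'I_T -> R) : (forall k, `|w k| = 1) ->
  forall t p, hinge (fun x => net w b v a0 c0 x t) p (jump (knotpos w b) v p t).
Proof.
move=> w1 t p.
have [a1 [c1 E]] := net_reweight b v (fun _ _ => 0 : R) a0 c0 w1.
have -> : (fun x => net w b v a0 c0 x t) =
    (fun x => \sum_k v k t * Num.max 0 (x - knotpos w b k) + a1 t * x + c1 t).
  apply: funext => x; move: (E x t); rewrite {1}/net big1 ?add0r => [e|k _]; last first.
    by rewrite mul0r.
  rewrite -addrA e addrCA -big_split big1 ?addr0 // => k _ /=; ring.
exact: relu_sum_hinge.
Qed.

End Network.

Section SetJump.
Variables (R : realType) (I : finType) (T : nat) (P : I -> R).
Implicit Types (v : I -> 'I_T -> R) (J : 'I_T -> R).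

Definition set_jump v p k0 J : I -> 'I_T -> R :=
  fun k => if P k == p then (if k == k0 then J else fun _ => 0) else v k.

Lemma jump_set_jump v p k0 J : P k0 = p -> jump P (set_jump v p k0 J) p = J.
Proof.
move=> Pk0; apply: funext => t.
rewrite /jump (bigD1 k0) ?Pk0 //= big1 => [|k /andP[Pk k0k]].
  by rewrite /set_jump Pk0 !eqxx addr0.
by rewrite /set_jump Pk (negbTE k0k).
Qed.

Lemma jump_set_jump_neq v p k0 J p' : p' != p ->
  jump P (set_jump v p k0 J) p' = jump P v p'.
Proof.
move=> p'p; apply: funext => t; apply: eq_bigr => k /eqP Pk.
by rewrite /set_jump Pk (negbTE p'p).
Qed.

Lemma sum_set_jump v p k0 J (h : R -> R) t : P k0 = p ->
  \sum_k (set_jump v p k0 J k t - v k t) * h (P k) = (J t - jump P v p t) * h p.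
Proof.
move=> Pk0; rewrite (bigID (fun k => P k == p)) /= [X in _ + X]big1 => [|k Pk]; last first.
  by rewrite /set_jump (negbTE Pk) subrr mul0r.
rewrite addr0 (eq_bigr (fun k => (set_jump v p k0 J k t - v k t) * h p)) => [|k /eqP-> //].
by rewrite -mulr_suml sumrB -/(jump P _ p t) -/(jump P v p t) jump_set_jump.
Qed.

Lemma cost_set_jump v p k0 J : P k0 = p ->
  \sum_k norm2 (set_jump v p k0 J k) + norm2 (jump P v p) <= \sum_k norm2 (v k) + norm2 J.
Proof.
move=> Pk0; rewrite (bigID (fun k => P k == p)).
rewrite [X in _ <= X + _](bigID (fun k => P k == p)) /=.
have -> : \sum_(k | P k == p) norm2 (set_jump v p k0 J k) = norm2 J.
  rewrite (bigD1 k0) ?Pk0 //= big1 => [|k /andP[Pk k0k]].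
    by rewrite /set_jump Pk0 !eqxx addr0.
  by rewrite /set_jump Pk (negbTE k0k) norm2_cst0.
have -> : \sum_(k | P k != p) norm2 (set_jump v p k0 J k) =
          \sum_(k | P k != p) norm2 (v k).
  by apply: eq_bigr => k Pk; rewrite /set_jump (negbTE Pk).
have := norm2_sum_le (index_enum I) (fun k => P k == p) v; rewrite -/(jump P v p).
lra.
Qed.

Lemma jump_neq0_has_neuron v p t : jump P v p t != 0 -> exists k, P k = p.
Proof.
case: (pickP (fun k => P k == p)) => [k /eqP Pk _|none]; first by exists k.
by rewrite /jump big_pred0 ?eqxx.
Qed.

End SetJump.

Lemma net_set_jump (R : realType) (K T : nat) (w b : 'I_K -> R) (v : 'I_K -> 'I_T -> R)
    (a0 c0 J : 'I_T -> R) (p : R) (k0 : 'I_K) :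
  (forall k, `|w k| = 1) -> knotpos w b k0 = p ->
  exists a1 c1, forall x t,
    net w b (set_jump (knotpos w b) v p k0 J) a1 c1 x t =
    net w b v a0 c0 x t + (J t - jump (knotpos w b) v p t) * Num.max 0 (x - p).
Proof.
move=> w1 Pk0.
have [a1 [c1 E]] := net_reweight b v (set_jump (knotpos w b) v p k0 J) a0 c0 w1.
exists a1, c1 => x t.
by rewrite E (sum_set_jump v J (fun y => Num.max 0 (x - y)) t Pk0).
Qed.

Section Kink.
Variables (R : realType) (K T : nat) (f : R -> 'I_T -> R) (xt1 xt xt2 q : R).
Variables (a b c d : 'I_T -> R).
Hypotheses (x1x : xt1 < xt) (xx2 : xt < xt2) (qE : q * (xt2 - xt) = xt - xt1).
Hypotheses (knot1 : fknot f xt1) (knot : fknot f xt) (knot2 : fknot f xt2).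
Hypotheses (slope_a : forall t, slope_left (fun x => f x t) xt1 (a t))
  (slope_1 : forall t, slope_on (fun x => f x t) xt1 xt (b t + d t))
  (slope_2 : forall t, slope_on (fun x => f x t) xt xt2 (b t - q * d t))
  (slope_c : forall t, slope_right (fun x => f x t) xt2 (c t)).
Variables (w bb : 'I_K -> R) (v : 'I_K -> 'I_T -> R) (a0 c0 : 'I_T -> R).
Hypotheses (w1 : forall k, `|w k| = 1) (fE : f = net w bb v a0 c0).

Local Notation P := (knotpos w bb).

Lemma f_hinge t p : hinge (fun x => f x t) p (jump P v p t).
Proof. by rewrite fE; apply: net_hinge. Qed.

Lemma kink_jumps :
  [/\ jump P v xt1 = (fun t => b t + d t - a t),
      jump P v xt = (fun t => (b t - q * d t) - (b t + d t))
    & jump P v xt2 = (fun t => c t - (b t - q * d t))].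
Proof.
split; apply: funext => t; apply: (hinge_jump (f_hinge t _)).
- exact: slope_a.
- exact: slope_on_right x1x (slope_1 t).
- exact: slope_on_left x1x (slope_1 t).
- exact: slope_on_right xx2 (slope_2 t).
- exact: slope_on_left xx2 (slope_2 t).
- exact: slope_c.
Qed.

Lemma knot_neuron p : fknot f p -> exists k, P k = p.
Proof.
by move=> [t kt]; apply: jump_neq0_has_neuron (hinge_knot (f_hinge t p) kt).
Qed.

Lemma kink_dir_neq0 : norm2 d != 0.
Proof.
have [t kt] := knot; have := hinge_knot (f_hinge t xt) kt; have [_ -> _] := kink_jumps.
move=> /= jump0; apply/eqP => /norm2_eq0 d0; move: jump0.
by rewrite d0 mulr0 subr0 addr0 subrr eqxx.
Qed.

Lemma remove_knot_relu x t : remove_knot f xt1 xt2 x t =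
  f x t - d t * Num.max 0 (x - xt1) + (1 + q) * d t * Num.max 0 (x - xt)
        - q * d t * Num.max 0 (x - xt2).
Proof.
apply: (chord_relu (g := fun y => f y t) (s := b t) (dl := d t) x1x xx2 qE).
  exact: slope_on_closed x1x (f_hinge t xt1) (f_hinge t xt) (slope_1 t).
exact: slope_on_closed xx2 (f_hinge t xt) (f_hinge t xt2) (slope_2 t).
Qed.

(* Move the jumps at x1 and x2 to the chord slopes and drop the one at x. *)
Lemma remove_knot_net : exists v' a0' c0',
  remove_knot f xt1 xt2 = net w bb v' a0' c0' /\
  \sum_k norm2 (v' k) + kink_saving a b c d q <= \sum_k norm2 (v k).
Proof.
have [k1 Pk1] := knot_neuron knot1.
have [k0 Pk0] := knot_neuron knot.
have [k2 Pk2] := knot_neuron knot2.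
have [J1 J0 J2] := kink_jumps.
set v1 := set_jump P v xt1 k1 (fun t => b t - a t).
set v2 := set_jump P v1 xt k0 (fun _ => 0).
have J0' : jump P v1 xt = jump P v xt by rewrite jump_set_jump_neq // gt_eqF.
have J2' : jump P v2 xt2 = jump P v xt2.
  by rewrite !jump_set_jump_neq // gt_eqF //; apply: lt_trans xx2.
have [a1 [c1 E1]] := net_set_jump v a0 c0 (fun t => b t - a t) w1 Pk1.
have [a2 [c2 E2]] := net_set_jump v1 a1 c1 (fun _ => 0) w1 Pk0.
have [a3 [c3 E3]] := net_set_jump v2 a2 c2 (fun t => c t - b t) w1 Pk2.
exists (set_jump P v2 xt2 k2 (fun t => c t - b t)), a3, c3; split.
  apply: funext => x; apply: funext => t.
  by rewrite E3 E2 E1 -fE J2' J0' J1 J0 J2 remove_knot_relu; ring.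
have := cost_set_jump v (fun t => b t - a t) Pk1.
have := cost_set_jump v1 (fun _ => 0) Pk0.
have := cost_set_jump v2 (fun t => c t - b t) Pk2.
rewrite J2' J0' J1 J0 J2 norm2_cst0 /kink_saving; lra.
Qed.

End Kink.

Section RepCost.
Variables (R : realType) (K T : nat).
Implicit Types f g : R -> 'I_T -> R.

Lemma repcost_ge0 f : (0 <= repcost K f)%E.
Proof.
apply: le_ereal_inf_tmp => _ [w [b [v [a0 [c0 [_ [_ ->]]]]]]].
by rewrite lee_fin sumr_ge0 // => k _; apply: norm2_ge0.
Qed.

Lemma repcost_representable f : (repcost K f < +oo)%E ->
  exists w b v a0 c0, (forall k, `|w k| = 1) /\ f = @net R K T w b v a0 c0.
Proof.
by move=> /ereal_inf_lt[_ [w [b [v [a0 [c0 [w1 [fE _]]]]]]] _]; exists w, b, v, a0, c0.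
Qed.

Lemma repcost_leD f g (s : R) :
  (forall (w b : 'I_K -> R) v (a0 c0 : 'I_T -> R),
     (forall k, `|w k| = 1) -> f = net w b v a0 c0 ->
     exists v' a0' c0', g = net w b v' a0' c0' /\
       \sum_k norm2 (v' k) + s <= \sum_k norm2 (v k)) ->
  (repcost K g + s%:E <= repcost K f)%E.
Proof.
move=> cheaper; apply: le_ereal_inf_tmp => _ [w [b [v [a0 [c0 [w1 [fE ->]]]]]]].
have [v' [a0' [c0' [gE le_v]]]] := cheaper w b v a0 c0 w1 fE.
have g_le : (repcost K g <= (\sum_k norm2 (v' k))%:E)%E.
  by apply: ereal_inf_lbound; exists w, b, v', a0', c0'.
by apply: le_trans (leeD g_le (lexx _)) _; rewrite -EFinD lee_fin.
Qed.

Lemma repcost_lt_of_leD f g (s : R) : 0 < s ->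
  (repcost K g + s%:E <= repcost K f)%E -> (repcost K f < +oo)%E ->
  (repcost K g < repcost K f)%E.
Proof.
move=> s0 le_gf f_fin; have g_fin : repcost K g \is a fin_num.
  rewrite ge0_fin_numE ?repcost_ge0 //; apply: le_lt_trans f_fin.
  by apply: le_trans le_gf; rewrite leeDl // lee_fin ltW.
by apply: lt_le_trans le_gf; rewrite lteDl // lte_fin.
Qed.

End RepCost.

Theorem lemma1 (R : realType) (K T N : nat)
  (xs : 'I_N -> R) (ys : 'I_N -> 'I_T -> R) (f : R -> 'I_T -> R)
  (xt xt1 xt2 : R) (a b c d : 'I_T -> R) :
  (forall i j : 'I_N, (i < j)%N -> xs i < xs j) ->
  (forall t, cpwl (fun x => f x t)) ->
  (forall i t, f (xs i) t = ys i t) ->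
  (exists i j : 'I_N, val j = (val i).+1 /\ xs i < xt < xs j) ->
  fknot f xt ->
  xt1 < xt -> xt < xt2 -> fknot f xt1 -> fknot f xt2 ->
  (forall p, fknot f p -> xt1 < p < xt2 -> p = xt) ->
  let tau := (xt - xt1) / (xt2 - xt1) in
  (forall t, slope_left (fun x => f x t) xt1 (a t)) ->
  (forall t, slope_on (fun x => f x t) xt1 xt (b t + d t)) ->
  (forall t, slope_on (fun x => f x t) xt xt2 (b t - tau / (1 - tau) * d t)) ->
  (forall t, slope_right (fun x => f x t) xt2 (c t)) ->
  (repcost K (remove_knot f xt1 xt2) <= repcost K f)%E /\
  ((repcost K f < +oo)%E ->
   ~ aligned (fun t => a t - b t) (fun t => b t - c t) ->
   (repcost K (remove_knot f xt1 xt2) < repcost K f)%E).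
Proof.
move=> _ _ _ _ knot x1x xx2 knot1 knot2 _ tau slope_a slope_1 slope_2 slope_c.
set q := (xt - xt1) / (xt2 - xt).
have x2x0 : xt2 - xt != 0 by rewrite subr_eq0 gt_eqF.
have qE : q * (xt2 - xt) = xt - xt1 by rewrite /q divfK.
have q0 : 0 < q by rewrite /q divr_gt0 // subr_gt0.
have tauE : tau / (1 - tau) = q.
  by rewrite /tau /q; field; rewrite x2x0 subr_eq0 gt_eqF //; apply: lt_trans xx2.
rewrite tauE in slope_2.
have le_cost := repcost_leD (K := K) (s := kink_saving a b c d q)
  (fun w bb v a0 c0 w1 fE => remove_knot_net x1x xx2 qE knot1 knot knot2
                                slope_a slope_1 slope_2 slope_c w1 fE).
split.
  by apply: le_trans _ le_cost; rewrite leeDl // lee_fin kink_saving_ge0 // ltW.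
move=> f_fin not_aligned.
have [w [bb [v [a0 [c0 [w1 fE]]]]]] := repcost_representable f_fin.
have d0 := kink_dir_neq0 x1x xx2 knot slope_a slope_1 slope_2 slope_c w1 fE.
exact: repcost_lt_of_leD (kink_saving_gt0 q0 d0 not_aligned) le_cost f_fin.
Qed.
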